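(* For all $k\in\mathbb N$, $\mathbf{FO}(=\!(\cdot),\mathrm{All}_k,\sqcup)\subsetneq\mathbf{FO}(=\!(\cdot),\mathrm{All}_{k+1},\sqcup)$; moreover, every sentence of each of these logics is equivalent to some first-order sentence.
   Context: Team semantics (lax version). For a structure $\mathfrak M$ with domain $M$, a team $X$ is a (possibly empty) set of assignments $s:V\to M$, $V$ a finite set of variables; $X(\vec v)=\{s(\vec v):s\in X\}$. Satisfaction for formulas in negation normal form: first-order literal $\alpha$: every $s\in X$ satisfies $\alpha$ (Tarski); $\psi\vee\theta$: $X=Y\cup Z$ with $\mathfrak M\models_Y\psi$, $\mathfrak M\models_Z\theta$; $\psi\wedge\theta$: both; $\exists v\psi$: some $F:X\to\mathcal P(M)\setminus\{\emptyset\}$ with $\mathfrak M\models_{X[F/v]}\psi$, $X[F/v]=\{s[m/v]:s\in X,m\in F(s)\}$; $\forall v\psi$: $\mathfrak M\models_{X[M/v]}\psi$, $X[M/v]=\{s[m/v]:s\in X,m\in M\}$. A sentence $\phi$ is true in $\mathfrak M$ iff $\mathfrak M\models_{\{\emptyset\}}\phi$; it is equivalent to a first-order sentence $\phi'$ if $\mathfrak M\models_{\{\emptyset\}}\phi\iff\mathfrak M\models\phi'$ for all $\mathfrak M$. Constancy atoms $=\!(\vec v)$ (all arities): $\mathfrak M\models_X=\!(\vec v)$ iff $s(\vec v)=s'(\vec v)$ for all $s,s'\in X$. $\mathrm{All}_k$ denotes the $k$-ary totality atoms $\mathrm{All}_k(\vec v)$ for $k$-tuples $\vec v$ of variables: $\mathfrak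 M\models_X\mathrm{All}_k(\vec v)$ iff $X(\vec v)=M^k$. Classical disjunction: $\mathfrak M\models_X\phi\sqcup\psi$ iff $\mathfrak M\models_X\phi$ or $\mathfrak M\models_X\psi$. $\mathbf{FO}(\ldots)$ is first-order logic in negation normal form extended with the listed atoms/operators. $L_1\subseteq L_2$ means every formula of $L_1$ is equivalent (satisfied by the same teams in all structures) to some formula of $L_2$; $\subsetneq$ means $L_1\subseteq L_2$ but not $L_2\subseteq L_1$. *)

From mathcomp Require Import all_boot.

Set Implicit Arguments.
Unset Strict Implicit.
Unset Printing Implicit Defensive.

(* A first-order vocabulary: relation and function symbols with arities
   (constants are 0-ary function symbols). *)
Record signature := Signature {
  rsym : Type; rar : rsym -> nat;
  fsym : Type; far : fsym -> nat }.

Section Syntax.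
Variable S : signature.

Inductive term : Type :=
| TVar (v : nat)
| TFun (f : fsym S) (args : 'I_(far f) -> term).

(* Formulas in negation normal form. *)
Inductive form : Type :=
| FEq   (t1 t2 : term)
| FNeq  (t1 t2 : term)
| FRel  (r : rsym S) (args : 'I_(rar r) -> term)
| FNRel (r : rsym S) (args : 'I_(rar r) -> term)
| FConst (vs : seq nat)
| FAllA  (vs : seq nat)
| FAnd (phi psi : form)
| FOr  (phi psi : form)
| FCor (phi psi : form)          (* classical disjunction ⊔ *)
| FEx (v : nat) (phi : form)
| FFa (v : nat) (phi : form).

Fixpoint tfree (v : nat) (t : term) : bool :=
  match t with
  | TVar w => w == v
  | TFun f a => [exists i, tfree v (a i)]
  end.

Fixpoint ffree (v : nat) (phi : form) : bool :=
  match phi with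
  | FEq t1 t2 | FNeq t1 t2 => tfree v t1 || tfree v t2
  | FRel r a | FNRel r a => [exists i, tfree v (a i)]
  | FConst vs | FAllA vs => v \in vs
  | FAnd p q | FOr p q | FCor p q => ffree v p || ffree v q
  | FEx w p | FFa w p => (w != v) && ffree v p
  end.

Definition sentence (phi : form) : Prop := forall v, ~~ ffree v phi.

Fixpoint isFO (phi : form) : bool :=
  match phi with
  | FEq _ _ | FNeq _ _ | FRel _ _ | FNRel _ _ => true
  | FConst _ | FAllA _ | FCor _ _ => false
  | FAnd p q | FOr p q => isFO p && isFO q
  | FEx _ p | FFa _ p => isFO p
  end.

Fixpoint inFOconstAllCor (k : nat) (phi : form) : bool :=
  match phi with
  | FEq _ _ | FNeq _ _ | FRel _ _ | FNRel _ _ => true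
  | FConst _ => true
  | FAllA vs => size vs == k
  | FAnd p q | FOr p q | FCor p q => inFOconstAllCor k p && inFOconstAllCor k q
  | FEx _ p | FFa _ p => inFOconstAllCor k p
  end.

End Syntax.

Arguments TVar {S}.

Record structure (S : signature) := mkStructure {
  dom : Type;
  dom0 : dom;
  rint : forall r : rsym S, ('I_(rar r) -> dom) -> Prop;
  fint : forall f : fsym S, ('I_(far f) -> dom) -> dom }.

Section Semantics.
Variable S : signature.
Variable M : structure S.

(* Assignments are partial functions with (for teams) a finite domain V;
   None = undefined. *)
Definition assign := nat -> option (dom M).
Definition team := assign -> Prop.

Definition empty_assign : assign := fun _ => None.

Definition upd (s : assign) (v : nat) (m : dom M) : assign :=
  fun w => if w == v then Some m else s w.

Definition team_on (V : seq nat) (X : team) : Prop :=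
  forall s, X s -> forall v, isSome (s v) = (v \in V).

Fixpoint teval (s : assign) (t : term S) : option (dom M) :=
  match t with
  | TVar v => s v
  | TFun f a =>
      if [forall i, isSome (teval s (a i))]
      then Some (fint (fun i => odflt (dom0 M) (teval s (a i))))
      else None
  end.

Definition lit_eq s t1 t2 : Prop :=
  exists m, teval s t1 = Some m /\ teval s t2 = Some m.
Definition lit_neq s t1 t2 : Prop :=
  exists m1 m2, teval s t1 = Some m1 /\ teval s t2 = Some m2 /\ m1 <> m2.
Definition lit_rel s (r : rsym S) (a : 'I_(rar r) -> term S) : Prop :=
  exists ms, (forall i, teval s (a i) = Some (ms i)) /\ rint ms.
Definition lit_nrel s (r : rsym S) (a : 'I_(rar r) -> term S) : Prop :=
  exists ms, (forall i, teval s (a i) = Some (ms i)) /\ ~ rint ms.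

(* Lax team semantics. *)
Fixpoint tsat (X : team) (phi : form S) : Prop :=
  match phi with
  | FEq t1 t2 => forall s, X s -> lit_eq s t1 t2
  | FNeq t1 t2 => forall s, X s -> lit_neq s t1 t2
  | FRel r a => forall s, X s -> lit_rel s a
  | FNRel r a => forall s, X s -> lit_nrel s a
  | FConst vs => forall s s', X s -> X s' -> map s vs = map s' vs
  | FAllA vs => forall ms : seq (dom M), size ms = size vs ->
                  exists s, X s /\ map s vs = map Some ms
  | FAnd p q => tsat X p /\ tsat X q
  | FOr p q => exists Y Z : team, (forall s, X s <-> Y s \/ Z s) /\
                  tsat Y p /\ tsat Z q
  | FCor p q => tsat X p \/ tsat X q
  | FEx v p => exists F : assign -> dom M -> Prop,
                  (forall s, X s -> exists m, F s m) /\
                  tsat (fun t => exists s m, [/\ X s, F s m & t = upd s v m]) p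
  | FFa v p => tsat (fun t => exists s m, X s /\ t = upd s v m) p
  end.

(* Tarski semantics (used only on first-order formulas). *)
Fixpoint fosat (s : assign) (phi : form S) : Prop :=
  match phi with
  | FEq t1 t2 => lit_eq s t1 t2
  | FNeq t1 t2 => lit_neq s t1 t2
  | FRel r a => lit_rel s a
  | FNRel r a => lit_nrel s a
  | FConst _ | FAllA _ | FCor _ _ => False
  | FAnd p q => fosat s p /\ fosat s q
  | FOr p q => fosat s p \/ fosat s q
  | FEx v p => exists m, fosat (upd s v m) p
  | FFa v p => forall m, fosat (upd s v m) p
  end.

Definition team_true (phi : form S) : Prop :=
  tsat (fun s => s = empty_assign) phi.
Definition fo_true (phi : form S) : Prop := fosat empty_assign phi.

End Semantics.

Definition fequiv (S : signature) (phi psi : form S) : Prop :=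
  forall (M : structure S) (V : seq nat) (X : team M),
    team_on V X -> (forall v, ffree v phi || ffree v psi -> v \in V) ->
    (tsat X phi <-> tsat X psi).

Definition logic := forall S : signature, form S -> bool.

Definition included (L1 L2 : logic) : Prop :=
  forall (S : signature) (phi : form S), L1 S phi ->
    exists psi : form S, L2 S psi /\ fequiv phi psi.

Definition strictly_included (L1 L2 : logic) : Prop :=
  included L1 L2 /\ ~ included L2 L1.

Definition FOconstAllCor (k : nat) : logic := fun S phi => inFOconstAllCor k phi.

Definition sentences_FO (L : logic) : Prop :=
  forall (S : signature) (phi : form S), L S phi -> sentence phi ->
    exists phi' : form S, [/\ isFO phi', sentence phi' &
      forall M : structure S, team_true M phi <-> fo_true M phi'].

(* The inclusion of FO(=(.), All_k, ⊔) in FO(=(.), All_(k+1), ⊔) comes from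
   rewriting All_k(x) as ∀w All_(k+1)(x, w) with w fresh.

   Strictness is a counting argument.  If a formula with n totality atoms of
   arity k holds in a team X, then it also holds in every subteam of X that
   contains the values of n suitable functions from k-tuples to X: literals
   and constancy atoms are downward closed, a totality atom needs one
   witness per tuple, and the connectives combine or pull back witnesses.
   Over a domain with n + 1 elements the full team satisfies
   All_(k+1)(v0, ..., vk), yet a subteam of size at most n (n + 1)^k cannot.

   For sentences, each formula is unfolded into a finite disjunction of
   clauses: a first-order guard that every assignment of the team satisfies,
   together with totality demands "every tuple is realised by an assignment
   satisfying th".  The constancy atoms are handled by fresh variables that
   carry the constant values.  On the team {∅} a clause is first-order once
   these variables are quantified existentially and the tuple of each
   demand universally. *)

From mathcomp Require Import all_boot zify.
From Stdlib Require Import FunctionalExtensionality.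
From Stdlib Require Lists.List ClassicalEpsilon.

Set Implicit Arguments.
Unset Strict Implicit.
Unset Printing Implicit Defensive.

Section Assignments.
Variables (S : signature) (M : structure S).
Implicit Types (s : assign M) (phi : form S) (t : term S).

Lemma upd_same s v m : upd s v m v = Some m.
Proof. by rewrite /upd eqxx. Qed.

Lemma upd_other s v w m : w != v -> upd s v m w = s w.
Proof. by rewrite /upd => /negbTE ->. Qed.

Lemma upd_comm s x y m n : x != y -> upd (upd s x m) y n = upd (upd s y n) x m.
Proof.
move=> nxy; apply: functional_extensionality => w.
by rewrite /upd; case: eqVneq => // ->; rewrite eq_sym (negbTE nxy).
Qed.

Lemma teval_agree t s s' :
  (forall v, tfree v t -> s v = s' v) -> teval s t = teval s' t.
Proof.
elim: t => [v|f a IH] /= H; first by apply: H; rewrite /= eqxx.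
have E i : teval s (a i) = teval s' (a i).
  by apply: IH => v hv; apply: H; apply/existsP; exists i.
rewrite (eq_forallb (fun i => congr1 isSome (E i))).
case: ifP => // _; congr (Some (fint _)).
by apply: functional_extensionality => i; rewrite E.
Qed.

Lemma fosat_agree phi s s' :
  (forall v, ffree v phi -> s v = s' v) -> fosat s phi <-> fosat s' phi.
Proof.
elim: phi s s' => [t1 t2|t1 t2|r a|r a|vs|vs|p IHp q IHq|p IHp q IHq|p IHp q IHq
                   |x p IHp|x p IHp] s s' H //=.
- rewrite /lit_eq (@teval_agree t1 s s') ?(@teval_agree t2 s s') //;
  by move=> v hv; apply: H; rewrite /= hv ?orbT.
- rewrite /lit_neq (@teval_agree t1 s s') ?(@teval_agree t2 s s') //;
  by move=> v hv; apply: H; rewrite /= hv ?orbT.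
- have E i : teval s (a i) = teval s' (a i).
    by apply: teval_agree => v hv; apply: H; apply/existsP; exists i.
  by split=> -[ms [h1 h2]]; exists ms; split=> // i; rewrite -(h1 i) E.
- have E i : teval s (a i) = teval s' (a i).
    by apply: teval_agree => v hv; apply: H; apply/existsP; exists i.
  by split=> -[ms [h1 h2]]; exists ms; split=> // i; rewrite -(h1 i) E.
- by rewrite (IHp s s') ?(IHq s s') // => v hv; apply: H; rewrite /= hv ?orbT.
- by rewrite (IHp s s') ?(IHq s s') // => v hv; apply: H; rewrite /= hv ?orbT.
- have E m : fosat (upd s x m) p <-> fosat (upd s' x m) p.
    apply: IHp => v hv; rewrite /upd; case: eqVneq => // nv.
    by apply: H; rewrite /= eq_sym nv.
  by split=> -[m /E hm]; exists m.
- have E m : fosat (upd s x m) p <-> fosat (upd s' x m) p.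
    apply: IHp => v hv; rewrite /upd; case: eqVneq => // nv.
    by apply: H; rewrite /= eq_sym nv.
  by split=> hm m; apply/E.
Qed.

Fixpoint upds s (A : seq nat) (ms : seq (dom M)) : assign M :=
  if A is a :: A' then if ms is m :: ms' then upds (upd s a m) A' ms' else s else s.

Lemma upds_out s A ms v : v \notin A -> upds s A ms v = s v.
Proof.
elim: A s ms => [|a A IH] s [|m ms] //=; rewrite inE negb_or => /andP [na nA].
by rewrite IH // upd_other.
Qed.

Lemma upds_in s A (e : nat -> dom M) v :
  uniq A -> v \in A -> upds s A (map e A) v = Some (e v).
Proof.
elim: A s => [|a A IH] s //= /andP [na uA]; rewrite inE => /orP [/eqP ->|hv].
  by rewrite upds_out // upd_same.
exact: IH.
Qed.

Lemma upds_agree s s' A ms v : (v \in A /\ size ms = size A) \/ s v = s' v ->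
  upds s A ms v = upds s' A ms v.
Proof.
elim: A s s' ms => [|a A IH] s s' [|m ms] /=; try by case=> [[]|].
move=> H; apply: IH; have [->|na] := eqVneq v a; first by right; rewrite !upd_same.
case: H => [[]|e]; last by right; rewrite !upd_other.
by rewrite inE (negbTE na) /= => hA [hs]; left.
Qed.

Lemma upds_upd s A ms x m :
  x \notin A -> upds (upd s x m) A ms = upd (upds s A ms) x m.
Proof.
elim: A s ms => [|a A IH] s [|n ms] //=; rewrite inE negb_or => /andP [nxa nA].
by rewrite upd_comm // IH.
Qed.

Lemma upds_map s A ms :
  uniq A -> size ms = size A -> map (upds s A ms) A = map Some ms.
Proof.
elim: A s ms => [|a A IH] s [|m ms] //= /andP [na uA] [hs].
by rewrite IH // upds_out // upd_same.
Qed.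

Lemma upds_odflt s A ms d : uniq A -> size ms = size A ->
  map (fun v => odflt d (upds s A ms v)) A = ms.
Proof.
move=> uA hs; rewrite (map_comp (odflt d)) upds_map // -map_comp.
by elim: ms {hs} => //= m ms ->.
Qed.

Lemma map_as_block s vs off d : (forall v, v \in vs -> isSome (s v)) ->
  map s vs = map (fun w => Some (odflt d (s (nth 0 vs (w - off))))) (iota off (size vs)).
Proof.
move=> hs; rewrite -[off]addn0 iotaDl -map_comp.
transitivity (map ((fun v => Some (odflt d (s v))) \o nth 0 vs) (iota 0 (size vs))).
  rewrite map_comp -/(mkseq _ _) mkseq_nth; apply/eq_in_map => v /hs /=.
  by case: (s v).
by apply: eq_map => i /=; rewrite addn0 addKn.
Qed.

End Assignments.

Lemma map_Some_isSome (T : Type) (f : nat -> option T) vs ms v :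
  map f vs = map Some ms -> v \in vs -> isSome (f v).
Proof.
elim: vs ms => [|w vs IH] [|m ms] //= [h1 h2].
by rewrite inE => /orP [/eqP ->|]; [rewrite h1 | exact: IH h2].
Qed.

Section VariableBounds.
Variable S : signature.

Fixpoint tvars_below (B : nat) (t : term S) : bool :=
  match t with
  | TVar v => v < B
  | TFun f a => [forall i, tvars_below B (a i)]
  end.

Fixpoint vars_below (B : nat) (phi : form S) : bool :=
  match phi with
  | FEq t1 t2 | FNeq t1 t2 => tvars_below B t1 && tvars_below B t2
  | FRel r a | FNRel r a => [forall i, tvars_below B (a i)]
  | FConst vs | FAllA vs => all (fun v => v < B) vs
  | FAnd p q | FOr p q | FCor p q => vars_below B p && vars_below B q
  | FEx x p | FFa x p => (x < B) && vars_below B p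
  end.

Fixpoint tvar_bound (t : term S) : nat :=
  match t with
  | TVar v => v.+1
  | TFun f a => \max_(i < far f) tvar_bound (a i)
  end.

Fixpoint var_bound (phi : form S) : nat :=
  match phi with
  | FEq t1 t2 | FNeq t1 t2 => maxn (tvar_bound t1) (tvar_bound t2)
  | FRel r a | FNRel r a => \max_(i < rar r) tvar_bound (a i)
  | FConst vs | FAllA vs => \max_(v <- vs) v.+1
  | FAnd p q | FOr p q | FCor p q => maxn (var_bound p) (var_bound q)
  | FEx x p | FFa x p => maxn x.+1 (var_bound p)
  end.

Lemma tvars_belowE B t : tvars_below B t = (tvar_bound t <= B).
Proof.
elim: t => [v|f a IH] //=; apply/forallP/bigmax_leqP => [h i _|h i]; first by rewrite -IH.
by rewrite IH h.
Qed.

Lemma vars_belowE B phi : vars_below B phi = (var_bound phi <= B).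
Proof.
elim: phi => [t1 t2|t1 t2|r a|r a|vs|vs|p IHp q IHq|p IHp q IHq|p IHp q IHq
              |x p IHp|x p IHp] /=; rewrite ?geq_max ?tvars_belowE ?IHp ?IHq //.
- apply/idP/idP => [/forallP h|/bigmax_leqP h].
    by apply/bigmax_leqP => i _; rewrite -tvars_belowE.
  by apply/forallP => i; rewrite tvars_belowE h.
- apply/idP/idP => [/forallP h|/bigmax_leqP h].
    by apply/bigmax_leqP => i _; rewrite -tvars_belowE.
  by apply/forallP => i; rewrite tvars_belowE h.
- by apply/allP/bigmax_leqP_seq => [h v /h|h v hv]; last exact: h.
- by apply/allP/bigmax_leqP_seq => [h v /h|h v hv]; last exact: h.
Qed.

Lemma tvars_below_free B t v : tvars_below B t -> tfree v t -> v < B.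
Proof.
elim: t => [w|f a IH] /=; first by move=> h /eqP <-.
by move=> /forallP h /existsP [i hi]; exact: IH (h i) hi.
Qed.

Lemma vars_below_free B phi v : vars_below B phi -> ffree v phi -> v < B.
Proof.
elim: phi => [t1 t2|t1 t2|r a|r a|vs|vs|p IHp q IHq|p IHp q IHq|p IHp q IHq
              |x p IHp|x p IHp] /=;
 try (by move=> /andP [h1 h2] /orP [] h; [exact: tvars_below_free h1 h
                                         |exact: tvars_below_free h2 h]);
 try (by move=> /forallP h /existsP [i hi]; exact: tvars_below_free (h i) hi);
 try (by move=> /allP h hv; exact: h);
 try (by move=> /andP [h1 h2] /orP [] h; [exact: IHp | exact: IHq]);
 by move=> /andP [_ h] /andP [_ hv]; exact: IHp.
Qed.

End VariableBounds.

Section FOFormulas.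
Variable S : signature.

Definition ftrue : form S := FFa 0 (FEq (TVar 0) (TVar 0)).
Definition ffalse : form S := FEx 0 (FNeq (TVar 0) (TVar 0)).

Fixpoint eqs (vs cs : seq nat) : form S :=
  match vs, cs with
  | v :: vs', c :: cs' => FAnd (FEq (TVar v) (TVar c)) (eqs vs' cs')
  | _, _ => ftrue
  end.

Definition foralls (A : seq nat) (th : form S) : form S := foldr (@FFa S) th A.
Definition exs (A : seq nat) (th : form S) : form S := foldr (@FEx S) th A.
Definition conjL (l : list (form S)) : form S := foldr (@FAnd S) ftrue l.
Definition disjL (l : list (form S)) : form S := foldr (@FOr S) ffalse l.

Lemma isFO_eqs vs cs : isFO (eqs vs cs).
Proof. by elim: vs cs => [|v vs IH] [|c cs] //=; exact: IH. Qed.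

Lemma isFO_exs A th : isFO (exs A th) = isFO th.
Proof. by elim: A. Qed.

Lemma isFO_foralls A th : isFO (foralls A th) = isFO th.
Proof. by elim: A. Qed.

Lemma isFO_conjL l : (forall f, List.In f l -> isFO f) -> isFO (conjL l).
Proof.
by elim: l => [|f l IH] //= h; rewrite h ?IH //; [move=> g hg; apply: h; right | left].
Qed.

Lemma isFO_disjL l : (forall f, List.In f l -> isFO f) -> isFO (disjL l).
Proof.
by elim: l => [|f l IH] //= h; rewrite h ?IH //; [move=> g hg; apply: h; right | left].
Qed.

Lemma ffree_ftrue v : ffree v ftrue = false.
Proof. by rewrite /= orbb andNb. Qed.

Lemma ffree_eqs vs cs v : ffree v (eqs vs cs) -> (v \in vs) || (v \in cs).
Proof.
elim: vs cs => [|w vs IH] [|c cs]; rewrite ?ffree_ftrue //=.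
case/orP => [/orP [] /eqP <-|/IH]; rewrite !inE ?eqxx ?orbT //.
by case/orP => ->; rewrite ?orbT.
Qed.

Lemma ffree_exs v A th : ffree v (exs A th) = (v \notin A) && ffree v th.
Proof. by elim: A => [|a A IH] //=; rewrite IH inE negb_or eq_sym andbA. Qed.

Lemma ffree_foralls v A th : ffree v (foralls A th) = (v \notin A) && ffree v th.
Proof. by elim: A => [|a A IH] //=; rewrite IH inE negb_or eq_sym andbA. Qed.

Lemma ffree_conjL v l : ffree v (conjL l) -> exists2 f, List.In f l & ffree v f.
Proof.
elim: l => [|f l IH] /=; first by rewrite orbb andNb.
by case/orP => [h|/IH [g hg h]]; [exists f; first left | exists g; first right].
Qed.

Lemma ffree_disjL v l : ffree v (disjL l) -> exists2 f, List.In f l & ffree v f.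
Proof.
elim: l => [|f l IH] /=; first by rewrite orbb andNb.
by case/orP => [h|/IH [g hg h]]; [exists f; first left | exists g; first right].
Qed.

Section Semantics.
Variable M : structure S.
Implicit Types (s : assign M).

Lemma ftrue_sem s : fosat s ftrue.
Proof. by move=> m; exists m; rewrite /= upd_same. Qed.

Lemma ffalse_sem s : ~ fosat s ffalse.
Proof. by case=> m [m1 [m2 [/= -> [[->]]]]]. Qed.

Lemma eqs_sem s vs cs : size vs = size cs ->
  fosat s (eqs vs cs) <-> map s vs = map s cs /\ forall v, v \in vs -> isSome (s v).
Proof.
elim: vs cs => [|v vs IH] [|c cs] //= => [_|[hs]]; first by split=> // _; exact: ftrue_sem.
rewrite IH //; split.
- case=> [[m [/= h1 h2]] [h3 h4]]; split; first by rewrite h1 h2 h3.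
  by move=> w; rewrite inE => /orP [/eqP ->|/h4]; rewrite ?h1.
- case=> [[h1 h3] h4]; split; last by split=> // w hw; apply: h4; rewrite inE hw orbT.
  have := h4 v; rewrite inE eqxx => /(_ isT); case E: (s v) => [m|] // _.
  by exists m; rewrite /= -h1.
Qed.

Lemma foralls_sem s A th :
  fosat s (foralls A th) <-> forall ms, size ms = size A -> fosat (upds s A ms) th.
Proof.
elim: A s => [|a A IH] s /=; first by split=> [h [|]|h] //; exact: (h [::]).
split=> [h [|m ms] //= [hs]|h m]; first exact: (IH (upd s a m)).1 (h m) ms hs.
by apply/IH => ms hs; apply: (h (m :: ms)); rewrite /= hs.
Qed.

Lemma exs_sem s A th :
  fosat s (exs A th) <-> exists ms, size ms = size A /\ fosat (upds s A ms) th.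
Proof.
elim: A s => [|a A IH] s /=; first by split=> [h|[ms [_ h]]] //; exists [::].
split=> [[m /IH [ms [hs h]]]|[[|m ms] [//= [hs] h]]].
  by exists (m :: ms); rewrite /= hs.
by exists m; apply/IH; exists ms.
Qed.

Lemma conjL_sem s l : fosat s (conjL l) <-> forall f, List.In f l -> fosat s f.
Proof.
elim: l => [|f l IH] /=; first by split=> // _; exact: ftrue_sem.
rewrite IH; split=> [[h1 h2] g [<-|/h2]|h] //.
by split=> [|g hg]; apply: h; [left | right].
Qed.

Lemma disjL_sem s l : fosat s (disjL l) <-> exists2 f, List.In f l & fosat s f.
Proof.
elim: l => [|f l IH] /=; first by split=> [/ffalse_sem|[? []]].
rewrite IH; split=> [[h|[g hg h]]|[g [<-|hg] h]]; first (by exists f; first left);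
  [by exists g; first right | by left | by right; exists g].
Qed.

End Semantics.
End FOFormulas.

Arguments ftrue {S}.
Arguments ffalse {S}.
Arguments eqs {S}.

Section Translation.
Variables (S : signature) (B offA : nat).

(* A clause (g, D) stands for the teams X such that, for some values of the
   variables >= B, every s in X satisfies the guard g, and for each demand
   (A, th) in D and every tuple ms some s in X satisfies th once the
   variables A are set to ms.  The constancy atoms of a formula get pairwise
   disjoint blocks of fresh variables from [off] on, which hold the constant
   values; all totality atoms use the variables from [offA] on for the
   tuple they range over. *)
Definition clause := (form S * list (seq nat * form S))%type.

Fixpoint nconst (phi : form S) : nat :=
  match phi with
  | FConst vs => size vs
  | FAnd p q | FOr p q | FCor p q => nconst p + nconst q
  | FEx _ p | FFa _ p => nconst p
  | _ => 0
  end.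

Definition andC (c1 c2 : clause) : clause := (FAnd c1.1 c2.1, List.app c1.2 c2.2).

(* The assignment witnessing a demand of a disjunct (or of the body of an
   existential) must also satisfy that disjunct's guard (or the body's guard),
   hence the guard is conjoined to the demand. *)
Definition orC (c1 c2 : clause) : clause :=
  (FOr c1.1 c2.1, List.app (List.map (fun d => (d.1, FAnd c1.1 d.2)) c1.2)
                           (List.map (fun d => (d.1, FAnd c2.1 d.2)) c2.2)).

Definition exC x (c : clause) : clause :=
  (FEx x c.1, List.map (fun d => (d.1, FEx x (FAnd c.1 d.2))) c.2).

Definition faC x (c : clause) : clause :=
  (FFa x c.1, List.map (fun d => (d.1, FEx x d.2)) c.2).

Definition pairs (f : clause -> clause -> clause) (l1 l2 : list clause) :=
  List.flat_map (fun c1 => List.map (f c1) l2) l1.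

Lemma in_pairs f l1 l2 c : List.In c (pairs f l1 l2) ->
  exists c1 c2, [/\ List.In c1 l1, List.In c2 l2 & c = f c1 c2].
Proof.
rewrite /pairs List.in_flat_map => -[c1 [h1]] /List.in_map_iff [c2 [<- h2]].
by exists c1, c2.
Qed.

Lemma in_pairs2 f l1 l2 c1 c2 : List.In c1 l1 -> List.In c2 l2 ->
  List.In (f c1 c2) (pairs f l1 l2).
Proof.
by move=> h1 h2; apply/List.in_flat_map; exists c1; split=> //; apply: List.in_map.
Qed.

Fixpoint clauses (off : nat) (phi : form S) : list clause :=
  match phi with
  | FConst vs => [:: (eqs vs (iota off (size vs)), [::])]
  | FAllA vs => [:: (ftrue, [:: (iota offA (size vs), eqs vs (iota offA (size vs)))])]
  | FAnd p q => pairs andC (clauses off p) (clauses (off + nconst p) q)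
  | FOr p q => pairs orC (clauses off p) (clauses (off + nconst p) q)
  | FCor p q => List.app (clauses off p) (clauses (off + nconst p) q)
  | FEx x p => List.map (exC x) (clauses off p)
  | FFa x p => List.map (faC x) (clauses off p)
  | lit => [:: (lit, [::])]
  end.

Lemma clauses_FO off phi c : List.In c (clauses off phi) ->
  isFO c.1 /\ forall A th, List.In (A, th) c.2 -> isFO th.
Proof.
elim: phi off c => [t1 t2|t1 t2|r a|r a|vs|vs|p IHp q IHq|p IHp q IHq|p IHp q IHq
                   |x p IHp|x p IHp] off c /=; try by case=> // <-.
- by case=> // <-; split; [exact: isFO_eqs | move=> ? ? []].
- by case=> // <-; split=> // A th [[_ <-]|[]]; exact: isFO_eqs.
- case/in_pairs => [c1 [c2 [/IHp [g1 d1] /IHq [g2 d2] ->]]].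
  by split=> [|A th /List.in_app_iff [/d1|/d2]] //=; rewrite g1 g2.
- case/in_pairs => [c1 [c2 [/IHp [g1 d1] /IHq [g2 d2] ->]]].
  split=> /=; first by rewrite g1 g2.
  by move=> A th /List.in_app_iff [] /List.in_map_iff [[A' th'] [[_ <-]] /= hd];
    rewrite ?g1 ?g2 ?(d1 _ _ hd) ?(d2 _ _ hd).
- by case/List.in_app_iff => [/IHp|/IHq].
- case/List.in_map_iff => [c' [<- /IHp [g d]]]; split=> //.
  by move=> A th /List.in_map_iff [[A' th'] [[_ <-]] /= /d ->]; rewrite g.
- case/List.in_map_iff => [c' [<- /IHp [g d]]]; split=> //.
  by move=> A th /List.in_map_iff [[A' th'] [[_ <-]] /= /d].
Qed.

Definition in_scope (off : nat) (phi : form S) (v : nat) : Prop :=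
  (v < B -> ffree v phi) /\ (B <= v -> off <= v < off + nconst phi).

Definition clause_vars (off : nat) (phi : form S) (c : clause) : Prop :=
  (forall v, ffree v c.1 -> in_scope off phi v) /\
  forall A th, List.In (A, th) c.2 ->
    (forall a, a \in A -> offA <= a) /\
    forall v, ffree v th -> in_scope off phi v \/ v \in A.

Lemma in_scope_free off phi v : vars_below B phi -> ffree v phi -> in_scope off phi v.
Proof. by move=> hv hf; split=> // hBv; have := vars_below_free hv hf; lia. Qed.

Lemma in_scope_block off phi v :
  B <= off -> off <= v < off + nconst phi -> in_scope off phi v.
Proof. by move=> hB hr; split=> // hvB; lia. Qed.

Lemma in_scope_weaken off off' p phi v :
  (forall w, ffree w p -> ffree w phi) -> off' <= off ->
  off + nconst p <= off' + nconst phi -> in_scope off p v -> in_scope off' phi v.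
Proof. by move=> hf ho ho' [h1 h2]; split=> [/h1/hf //|/h2]; lia. Qed.

Lemma in_scope_bind off p phi x v :
  (forall w, ffree w phi = (x != w) && ffree w p) -> nconst phi = nconst p ->
  x != v -> in_scope off p v -> in_scope off phi v.
Proof. by move=> hf hn nxv [h1 h2]; split=> [/h1|]; rewrite ?hf ?nxv ?hn. Qed.

Lemma clause_vars_weaken off off' p phi c :
  (forall w, ffree w p -> ffree w phi) -> off' <= off ->
  off + nconst p <= off' + nconst phi -> clause_vars off p c -> clause_vars off' phi c.
Proof.
move=> hf ho ho' [hg hd]; have W := in_scope_weaken hf ho ho'.
split=> [v /hg /W //|A th /hd [hA ht]]; split=> // v /ht [/W|]; by [left|right].
Qed.

Lemma clause_vars_and off phi c1 c2 :
  clause_vars off phi c1 -> clause_vars off phi c2 -> clause_vars off phi (andC c1 c2).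
Proof.
by move=> [g1 d1] [g2 d2]; split=> [v /orP [/g1|/g2] //|A th /List.in_app_iff [/d1|/d2]].
Qed.

Lemma clause_vars_or off phi c1 c2 :
  clause_vars off phi c1 -> clause_vars off phi c2 -> clause_vars off phi (orC c1 c2).
Proof.
move=> [g1 d1] [g2 d2]; split=> [v /orP [/g1|/g2] //|A th].
case/List.in_app_iff => /List.in_map_iff [[A' th'] [[<- <-]]] => [/d1|/d2] [hA ht].
  by split=> // v /orP [/g1|/ht //]; left.
by split=> // v /orP [/g2|/ht //]; left.
Qed.

Lemma clause_vars_ex off p x c :
  clause_vars off p c -> clause_vars off (FEx x p) (exC x c).
Proof.
have bind := @in_scope_bind off p (FEx x p) x.
move=> [g d]; split=> [v /andP [nxv /g]|A th].
  exact: bind.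
case/List.in_map_iff => [[A' th'] [[<- <-]]] /d [hA ht].
split=> // v /andP [nxv /orP [/g|/ht]].
  by left; apply: bind.
by case=> [h|]; [left; apply: bind | right].
Qed.

Lemma clause_vars_fa off p x c :
  clause_vars off p c -> clause_vars off (FFa x p) (faC x c).
Proof.
have bind := @in_scope_bind off p (FFa x p) x.
move=> [g d]; split=> [v /andP [nxv /g]|A th].
  exact: bind.
case/List.in_map_iff => [[A' th'] [[<- <-]]] /d [hA ht]; split=> // v /andP [nxv /ht].
by case=> [h|]; [left; apply: bind | right].
Qed.

Lemma clauses_vars off phi c : vars_below B phi -> B <= off ->
  List.In c (clauses off phi) -> clause_vars off phi c.
Proof.
elim: phi off c => [t1 t2|t1 t2|r a|r a|vs|vs|p IHp q IHq|p IHp q IHq|p IHp q IHq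
                   |x p IHp|x p IHp] off c hv hB /=;
  try by case=> // <-; split=> // v /(in_scope_free off hv).
- case=> // <-; split=> //= v /ffree_eqs /orP [h|]; first exact: in_scope_free.
  by rewrite mem_iota => h; exact: (in_scope_block (phi := FConst S vs) hB h).
- case=> // <-; split=> [v|A th [] // [<- <-]]; first by rewrite ffree_ftrue.
  split=> [a|v /ffree_eqs /orP [h|]]; first by rewrite mem_iota => /andP [].
    by left; apply: in_scope_free.
  by right.
- case/andP: hv => hp hq /in_pairs [c1 [c2 [/IHp h1 /IHq h2 ->]]].
  apply: clause_vars_and.
    by apply: (clause_vars_weaken _ _ _ (h1 hp hB)) => //= [w ->|]; lia.
  by apply: (clause_vars_weaken _ _ _ (h2 hq _)) => //= [w ->|||]; rewrite ?orbT; lia.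
- case/andP: hv => hp hq /in_pairs [c1 [c2 [/IHp h1 /IHq h2 ->]]].
  apply: clause_vars_or.
    by apply: (clause_vars_weaken _ _ _ (h1 hp hB)) => //= [w ->|]; lia.
  by apply: (clause_vars_weaken _ _ _ (h2 hq _)) => //= [w ->|||]; rewrite ?orbT; lia.
- case/andP: hv => hp hq /List.in_app_iff [/IHp h|/IHq h].
    by apply: (clause_vars_weaken _ _ _ (h hp hB)) => //= [w ->|]; lia.
  by apply: (clause_vars_weaken _ _ _ (h hq _)) => //= [w ->|||]; rewrite ?orbT; lia.
- case/andP: hv => _ hp /List.in_map_iff [c' [<- /IHp h]].
  exact: clause_vars_ex (h hp hB).
- case/andP: hv => _ hp /List.in_map_iff [c' [<- /IHp h]].
  exact: clause_vars_fa (h hp hB).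
Qed.

End Translation.

Section TranslationSemantics.
Variables (S : signature) (M : structure S) (B offA : nat).
Hypothesis B_le_offA : B <= offA.
Implicit Types (s : assign M) (phi : form S) (X : team M) (e : nat -> dom M).

Local Notation clauses := (clauses offA).

Definition glue s e : assign M := fun v => if v < B then s v else Some (e v).

Lemma glue_lt s e v : v < B -> glue s e v = s v.
Proof. by rewrite /glue => ->. Qed.

Lemma glue_ge s e v : B <= v -> glue s e v = Some (e v).
Proof. by rewrite /glue leqNgt => /negbTE ->. Qed.

Lemma glue_upd s e x m : x < B -> glue (upd s x m) e = upd (glue s e) x m.
Proof.
move=> hx; apply: functional_extensionality => v.
by rewrite /glue /upd; case: eqVneq => // ->; rewrite hx.
Qed.

Lemma fosat_glue phi s e : vars_below B phi -> fosat (glue s e) phi <-> fosat s phi.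
Proof. by move=> hv; apply: fosat_agree => v /(vars_below_free hv) /glue_lt. Qed.

Definition clause_holds X e (c : clause S) : Prop :=
  (forall s, X s -> fosat (glue s e) c.1) /\
  forall A th, List.In (A, th) c.2 -> forall ms, size ms = size A ->
    exists2 s, X s & fosat (upds (glue s e) A ms) th.

Definition defined_on X phi : Prop :=
  forall s, X s -> forall v, ffree v phi -> isSome (s v).

Definition translates (off : nat) phi : Prop :=
  forall X, defined_on X phi ->
    (tsat X phi <-> exists e, exists2 c, List.In c (clauses off phi) & clause_holds X e c).

Lemma defined_on_sub X Y phi p :
  (forall s, Y s -> X s) -> (forall v, ffree v p -> ffree v phi) ->
  defined_on X phi -> defined_on Y p.
Proof. by move=> hYX hf hD s /hYX Xs v /hf; exact: hD. Qed.

Lemma defined_on_upd X Y x phi p :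
  (forall t, Y t -> exists s m, X s /\ t = upd s x m) ->
  (forall v, x != v -> ffree v p -> ffree v phi) ->
  defined_on X phi -> defined_on Y p.
Proof.
move=> hY hf hD t /hY [s [m [Xs ->]]] v hv; rewrite /upd.
have [//|nv] := eqVneq v x.
by apply: (hD s Xs v); apply: hf hv; rewrite eq_sym.
Qed.

Lemma clause_holds_env X phi off c e e' : vars_below B phi -> B <= off ->
  List.In c (clauses off phi) -> (forall v, off <= v < off + nconst phi -> e v = e' v) ->
  clause_holds X e c -> clause_holds X e' c.
Proof.
move=> hv hB hc he [hg hd]; have [F J] := clauses_vars hv hB hc.
have glue_eq s v : in_scope B off phi v -> glue s e v = glue s e' v.
  by rewrite /glue => -[_ hr]; case: ltnP => // /hr /he ->.
split=> [s Xs|A th hj ms hs].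
  by apply/(fosat_agree (s := glue s e)); [move=> v /F /glue_eq | exact: hg].
have [s Xs hth] := hd A th hj ms hs; exists s => //.
apply/(fosat_agree (s := upds (glue s e) A ms)) => // v /(J A th hj).2 [/glue_eq|] h.
  by apply: upds_agree; right.
by apply: upds_agree; left.
Qed.

Lemma common_env X1 X2 p q off e1 e2 c1 c2 :
  vars_below B p -> vars_below B q -> B <= off ->
  List.In c1 (clauses off p) -> List.In c2 (clauses (off + nconst p) q) ->
  clause_holds X1 e1 c1 -> clause_holds X2 e2 c2 ->
  exists e, clause_holds X1 e c1 /\ clause_holds X2 e c2.
Proof.
move=> hp hq hB h1 h2 s1 s2; exists (fun v => if v < off + nconst p then e1 v else e2 v).
split; first by apply: (clause_holds_env hp hB h1 _ s1) => v hr; case: ltnP => //; lia.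
apply: (clause_holds_env hq _ h2 _ s2) => [|v hr]; first lia.
by case: ltnP => //; lia.
Qed.

Lemma guard_upds phi off c A th s ms : vars_below B phi -> B <= off ->
  off + nconst phi <= offA -> List.In c (clauses off phi) -> List.In (A, th) c.2 ->
  fosat (upds s A ms) c.1 <-> fosat s c.1.
Proof.
move=> hv hB hO hc hj; have [F J] := clauses_vars hv hB hc; have [hA _] := J A th hj.
apply: fosat_agree => v /F [h1 h2]; apply: upds_out; apply/negP => /hA.
by case: (ltnP v B) => [|/h2]; lia.
Qed.

Lemma binder_notin_demand phi off c A th x : vars_below B phi -> B <= off -> x < B ->
  List.In c (clauses off phi) -> List.In (A, th) c.2 -> x \notin A.
Proof.
move=> hv hB hx hc hj; have [_ J] := clauses_vars hv hB hc.
by apply/negP => /(J A th hj).1; lia.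
Qed.

Lemma translates_lit off phi : vars_below B phi ->
  (forall X, tsat X phi <-> forall s, X s -> fosat s phi) ->
  clauses off phi = [:: (phi, [::])] -> translates off phi.
Proof.
move=> hv hsem hcl X _; rewrite hsem hcl; split=> [H|[e [c [<-|[]] [hg _]]] s Xs].
  exists (fun _ => dom0 M), (phi, [::]); first by left.
  by split=> [s Xs|A th []]; apply/fosat_glue => //; exact: H.
by apply/(fosat_glue _ e hv); exact: hg.
Qed.

Lemma translates_const off vs : vars_below B (FConst S vs) -> B <= off ->
  translates off (FConst S vs).
Proof.
move=> /allP hvs hB X hD; set cs := iota off (size vs).
have key s e : fosat (glue s e) (eqs vs cs) <->
    map s vs = map (Some \o e) cs /\ forall v, v \in vs -> isSome (s v).
  rewrite eqs_sem ?size_iota //.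
  have Evs : {in vs, glue s e =1 s} by move=> v /hvs /glue_lt.
  have -> : map (glue s e) cs = map (Some \o e) cs.
    by apply/eq_in_map => w; rewrite mem_iota => /andP [hw _]; rewrite glue_ge //; lia.
  have -> : map (glue s e) vs = map s vs by apply/eq_in_map.
  by split=> -[-> h]; split=> // v hv; move: (h v hv); rewrite Evs.
split=> [H|[e [c [<-|[]] [hg _]]] s s' Xs Xs']; last first.
  by have [-> _] := (key s e).1 (hg s Xs); have [-> _] := (key s' e).1 (hg s' Xs').
pose s0 := ClassicalEpsilon.epsilon (inhabits (empty_assign M)) X.
have X0 s : X s -> X s0 by move=> Xs; apply: ClassicalEpsilon.epsilon_spec; exists s.
exists (fun w => odflt (dom0 M) (s0 (nth 0 vs (w - off)))), (eqs vs cs, [::]).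
  by left.
split=> [s Xs|A th []]; apply/key; split=> [|v]; last exact: hD.
by rewrite (H s s0 Xs (X0 s Xs)) (map_as_block off (dom0 M)); last exact: (hD s0 (X0 s Xs)).
Qed.

Lemma translates_all off vs : vars_below B (FAllA S vs) -> translates off (FAllA S vs).
Proof.
move=> /allP hvs X _; set A := iota offA (size vs).
have key s e ms : size ms = size vs ->
    fosat (upds (glue s e) A ms) (eqs vs A) <-> map s vs = map Some ms.
  move=> hs; rewrite eqs_sem ?size_iota // upds_map ?iota_uniq ?size_iota //.
  have Evs : {in vs, upds (glue s e) A ms =1 s}.
    move=> v hv; rewrite upds_out ?glue_lt ?hvs //.
    by rewrite mem_iota; have := hvs v hv; lia.
  have -> : map (upds (glue s e) A ms) vs = map s vs by apply/eq_in_map.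
  split=> [[]//|h]; split=> // v hv.
  by rewrite Evs //; exact: map_Some_isSome h hv.
split=> [H|[e [c [<-|[]] [_ hd]]] ms hs].
  exists (fun _ => dom0 M), (ftrue, [:: (A, eqs vs A)]); first by left.
  split=> [s _|A' th [[<- <-]|[]] ms hs]; first exact: ftrue_sem.
  rewrite size_iota in hs; have [s [Xs hm]] := H ms hs.
  by exists s => //; apply/key.
have [s Xs hm] := hd A (eqs vs A) (or_introl erefl) ms ltac:(by rewrite size_iota).
by exists s; split=> //; apply/(key s e).
Qed.

Lemma translates_and off p q : vars_below B p -> vars_below B q -> B <= off ->
  translates off p -> translates (off + nconst p) q -> translates off (FAnd p q).
Proof.
move=> hp hq hB IHp IHq X hD.
have hDp : defined_on X p by apply: defined_on_sub hD => // v /= ->.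
have hDq : defined_on X q by apply: defined_on_sub hD => // v /= ->; rewrite orbT.
rewrite /= (IHp X hDp) (IHq X hDq); split.
  case=> [[e1 [c1 h1 s1]] [e2 [c2 h2 s2]]].
  have [e [[g1 d1] [g2 d2]]] := common_env hp hq hB h1 h2 s1 s2.
  exists e, (andC c1 c2); first exact: in_pairs2.
  by split=> [s Xs|A th /List.in_app_iff [/d1|/d2]] //; split; [exact: g1 | exact: g2].
case=> e [c /in_pairs [c1 [c2 [h1 h2 ->]]] [g d]].
split; [exists e, c1 | exists e, c2] => //;
  split=> [s /g [] //|A th hj]; apply: d; apply/List.in_app_iff; by [left | right].
Qed.

Lemma translates_cor off p q :
  translates off p -> translates (off + nconst p) q -> translates off (FCor p q).
Proof.
move=> IHp IHq X hD.
have hDp : defined_on X p by apply: defined_on_sub hD => // v /= ->.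
have hDq : defined_on X q by apply: defined_on_sub hD => // v /= ->; rewrite orbT.
rewrite /= (IHp X hDp) (IHq X hDq); split.
  by case=> -[e [c hc hs]]; exists e, c => //; apply/List.in_app_iff; [left | right].
by case=> e [c /List.in_app_iff [] hc hs]; [left | right]; exists e, c.
Qed.

Lemma translates_or off p q : vars_below B p -> vars_below B q -> B <= off ->
  off + nconst p + nconst q <= offA ->
  translates off p -> translates (off + nconst p) q -> translates off (FOr p q).
Proof.
move=> hp hq hB hO IHp IHq X hD.
have guard1 c A th s ms : List.In c (clauses off p) -> List.In (A, th) c.2 ->
    fosat (upds s A ms) c.1 <-> fosat s c.1.
  by move=> hc hj; apply: (guard_upds _ _ hp hB _ hc hj); lia.
have guard2 c A th s ms : List.In c (clauses (off + nconst p) q) -> List.In (A, th) c.2 ->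
    fosat (upds s A ms) c.1 <-> fosat s c.1.
  by move=> hc hj; apply: (guard_upds _ _ hq _ _ hc hj); lia.
split.
  case=> Y [Z [hX [tY tZ]]].
  have hDY : defined_on Y p.
    by apply: defined_on_sub hD => [s Ys|v /= ->] //; apply/hX; left.
  have hDZ : defined_on Z q.
    by apply: defined_on_sub hD => [s Zs|v /= ->]; rewrite ?orbT //; apply/hX; right.
  have [e1 [c1 h1 s1]] := (IHp Y hDY).1 tY; have [e2 [c2 h2 s2]] := (IHq Z hDZ).1 tZ.
  have [e [[g1 d1] [g2 d2]]] := common_env hp hq hB h1 h2 s1 s2.
  exists e, (orC c1 c2); first exact: in_pairs2.
  split=> [s /hX [/g1|/g2]|A th]; [by left | by right |].
  case/List.in_app_iff => /List.in_map_iff [[A' th'] [[<- <-]] hj] ms hs /=.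
    have [s Ys hth] := d1 A' th' hj ms hs; exists s; first by apply/hX; left.
    by split=> //; apply/(guard1 _ _ _ _ _ h1 hj); exact: g1.
  have [s Zs hth] := d2 A' th' hj ms hs; exists s; first by apply/hX; right.
  by split=> //; apply/(guard2 _ _ _ _ _ h2 hj); exact: g2.
case=> e [c /in_pairs [c1 [c2 [h1 h2 ->]]] [g d]].
exists (fun s => X s /\ fosat (glue s e) c1.1), (fun s => X s /\ fosat (glue s e) c2.1).
split; first by move=> s; split=> [Xs|[] []//]; case: (g s Xs); [left | right].
split.
  apply/IHp; first by apply: defined_on_sub hD => [s []|v /= ->].
  exists e, c1 => //; split=> [s []//|A th hj ms hs].
  have hj' : List.In (A, FAnd c1.1 th) (orC c1 c2).2.
    apply/List.in_app_iff; left.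
    exact: (List.in_map (fun d => (d.1, FAnd c1.1 d.2)) _ _ hj).
  have [s Xs [h0 hth]] := d _ _ hj' ms hs.
  by exists s => //; split=> //; apply/(guard1 _ _ _ _ _ h1 hj); exact: h0.
apply/IHq; first by apply: defined_on_sub hD => [s []|v /= ->]; rewrite ?orbT.
exists e, c2 => //; split=> [s []//|A th hj ms hs].
have hj' : List.In (A, FAnd c2.1 th) (orC c1 c2).2.
  apply/List.in_app_iff; right.
  exact: (List.in_map (fun d => (d.1, FAnd c2.1 d.2)) _ _ hj).
have [s Xs [h0 hth]] := d _ _ hj' ms hs.
by exists s => //; split=> //; apply/(guard2 _ _ _ _ _ h2 hj); exact: h0.
Qed.

Lemma translates_ex off x p : x < B -> vars_below B p -> B <= off ->
  off + nconst p <= offA -> translates off p -> translates off (FEx x p).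
Proof.
move=> hx hp hB hO IHp X hD.
have guard c A th s ms : List.In c (clauses off p) -> List.In (A, th) c.2 ->
    fosat (upds s A ms) c.1 <-> fosat s c.1.
  exact: guard_upds hp hB hO.
have nxA c A th : List.In c (clauses off p) -> List.In (A, th) c.2 -> x \notin A.
  exact: binder_notin_demand hp hB hx.
have hDF F : defined_on (fun t => exists s m, [/\ X s, F s m & t = upd s x m]) p.
  apply: defined_on_upd hD => [t [s [m [Xs _ ->]]]|v nxv hv /=]; first by exists s, m.
  by rewrite nxv hv.
split.
  case=> F [hF /(IHp _ (hDF F)) [e [c hc [g d]]]].
  exists e, (exC x c); first exact: List.in_map.
  split=> [s Xs|A th /List.in_map_iff [[A' th'] [[<- <-]] hj] ms hs /=].
    by have [m hm] := hF s Xs; exists m; rewrite -glue_upd //; apply: g; exists s, m.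
  have [t [s [m [Xs Fsm ->]]] ht] := d A' th' hj ms hs.
  exists s => //; exists m; rewrite -upds_upd ?(nxA _ _ _ hc hj) // -glue_upd //.
  by split=> //; apply/(guard _ _ _ _ _ hc hj); apply: g; exists s, m.
case=> e [c' /List.in_map_iff [c [<- hc]] [g d]].
exists (fun s m => fosat (glue (upd s x m) e) c.1); split.
  by move=> s /g [m hm]; exists m; rewrite glue_upd.
apply/(IHp _ (hDF _)); exists e, c => //; split=> [t [s [m [_ hm ->]]] //|A th hj ms hs].
have hj' : List.In (A, FEx x (FAnd c.1 th)) (exC x c).2.
  exact: (List.in_map (fun d => (d.1, FEx x (FAnd c.1 d.2))) _ _ hj).
have [s Xs [m [h0 hth]]] := d _ _ hj' ms hs.
rewrite -upds_upd ?(nxA _ _ _ hc hj) // -glue_upd // in h0 hth.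
exists (upd s x m) => //; exists s, m; split=> //; apply/(guard _ _ _ _ _ hc hj); exact: h0.
Qed.

Lemma translates_fa off x p : x < B -> vars_below B p -> B <= off ->
  translates off p -> translates off (FFa x p).
Proof.
move=> hx hp hB IHp X hD.
have nxA c A th : List.In c (clauses off p) -> List.In (A, th) c.2 -> x \notin A.
  exact: binder_notin_demand hp hB hx.
have hDX : defined_on (fun t => exists s m, X s /\ t = upd s x m) p.
  apply: defined_on_upd hD => [t [s [m [Xs ->]]]|v nxv hv /=]; first by exists s, m.
  by rewrite nxv hv.
rewrite /= (IHp _ hDX); split.
  case=> e [c hc [g d]]; exists e, (faC x c); first exact: List.in_map.
  split=> [s Xs m|A th /List.in_map_iff [[A' th'] [[<- <-]] hj] ms hs /=].
    by rewrite -glue_upd //; apply: g; exists s, m.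
  have [t [s [m [Xs ->]]] ht] := d A' th' hj ms hs.
  by exists s => //; exists m; rewrite -upds_upd ?(nxA _ _ _ hc hj) // -glue_upd.
case=> e [c' /List.in_map_iff [c [<- hc]] [g d]]; exists e, c => //; split.
  by move=> t [s [m [Xs ->]]]; rewrite glue_upd //; exact: g s Xs m.
move=> A th hj ms hs.
have [s Xs [m h]] := d A (FEx x th) (List.in_map (fun d => (d.1, FEx x d.2)) _ _ hj) ms hs.
exists (upd s x m); first by exists s, m.
by rewrite glue_upd // upds_upd ?(nxA _ _ _ hc hj).
Qed.

Lemma clauses_translate off phi : vars_below B phi -> B <= off ->
  off + nconst phi <= offA -> translates off phi.
Proof.
elim: phi off => [t1 t2|t1 t2|r a|r a|vs|vs|p IHp q IHq|p IHp q IHq|p IHp q IHq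
                 |x p IHp|x p IHp] off /= hv hB hO;
  try by apply: translates_lit => // X.
- exact: translates_const.
- exact: translates_all.
- case/andP: hv => hp hq; apply: translates_and => //; [apply: IHp | apply: IHq] => //; lia.
- case/andP: hv => hp hq.
  by apply: translates_or => //; [lia | apply: IHp | apply: IHq] => //; lia.
- case/andP: hv => hp hq; apply: translates_cor; [apply: IHp | apply: IHq] => //; lia.
- by case/andP: hv => hx hp; apply: translates_ex => //; apply: IHp.
- by case/andP: hv => hx hp; apply: translates_fa => //; apply: IHp.
Qed.

End TranslationSemantics.

Section FirstOrderSentences.
Variable S : signature.
Implicit Types (phi : form S) (c : clause S).

Definition clause_form c : form S :=
  FAnd c.1 (conjL (List.map (fun d => foralls d.1 d.2) c.2)).

Definition fo_matrix phi : form S :=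
  disjL (List.map clause_form
          (clauses (var_bound phi + nconst phi) (var_bound phi) phi)).

Definition fo_translation phi : form S :=
  exs (iota (var_bound phi) (nconst phi)) (fo_matrix phi).

Lemma isFO_fo_translation phi : isFO (fo_translation phi).
Proof.
rewrite isFO_exs; apply: isFO_disjL => f /List.in_map_iff [c [<- /clauses_FO [hg hd]]].
rewrite /= hg; apply: isFO_conjL => g /List.in_map_iff [[A th] [<- hj]].
by rewrite isFO_foralls (hd _ _ hj).
Qed.

Lemma clause_form_free B offA off phi c v :
  clause_vars B offA off phi c -> ffree v (clause_form c) -> in_scope B off phi v.
Proof.
case=> g d /orP [/g //|/ffree_conjL [f /List.in_map_iff [[A th] [<- hj]]]].
rewrite ffree_foralls => /andP [nvA /(d A th hj).2 [//|hvA]].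
by rewrite hvA in nvA.
Qed.

Lemma fo_matrix_free phi v :
  ffree v (fo_matrix phi) -> in_scope (var_bound phi) (var_bound phi) phi v.
Proof.
have hv : vars_below (var_bound phi) phi by rewrite vars_belowE.
case/ffree_disjL => f /List.in_map_iff [c [<- hc]].
exact/clause_form_free/(clauses_vars hv (leqnn _) hc).
Qed.

Lemma fo_translation_free phi v : ffree v (fo_translation phi) -> ffree v phi.
Proof.
rewrite ffree_exs mem_iota => /andP [nP /fo_matrix_free [h1 h2]].
by case: (ltnP v (var_bound phi)) => [/h1 //|/h2 hr]; rewrite hr in nP.
Qed.

Section Semantics.
Variable M : structure S.
Local Notation empty := (empty_assign M).

Lemma clause_form_sem (s : assign M) c :
  fosat s (clause_form c) <-> fosat s c.1 /\
    forall A th, List.In (A, th) c.2 ->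
      forall ms, size ms = size A -> fosat (upds s A ms) th.
Proof.
rewrite /clause_form /= conjL_sem; split=> -[h1 h2]; split=> //.
  move=> A th hj; apply/foralls_sem; apply: h2.
  exact: (List.in_map (fun d => foralls d.1 d.2) _ _ hj).
by move=> f /List.in_map_iff [[A th] [<- hj]]; apply/foralls_sem; exact: h2.
Qed.

Lemma clause_holds_empty B e c :
  clause_holds B (fun s => s = empty) e c <-> fosat (glue B empty e) (clause_form c).
Proof.
rewrite clause_form_sem; split=> -[g d]; split.
- exact: g.
- by move=> A th hj ms hsz; have [s -> h] := d A th hj ms hsz.
- by move=> s ->.
- by move=> A th hj ms hsz; exists empty; auto.
Qed.

Lemma fosat_glue_empty B n e f : (forall v, ffree v f -> v < B + n) ->
  fosat (glue B empty e) f <-> fosat (upds empty (iota B n) (map e (iota B n))) f.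
Proof.
move=> hf; apply: fosat_agree => v /hf hvn; case: (ltnP v B) => h.
  by rewrite glue_lt // upds_out // mem_iota; lia.
by rewrite glue_ge // upds_in ?iota_uniq // mem_iota h.
Qed.

Lemma fo_translation_sem phi :
  sentence phi -> team_true M phi <-> fo_true M (fo_translation phi).
Proof.
move=> hs; set B := var_bound phi; set n := nconst phi; set P := iota B n.
have hD : defined_on (fun s => s = empty) phi by move=> s _ v hf; have := hs v; rewrite hf.
have matrix_sem e : (exists2 c, List.In c (clauses (B + n) B phi) &
                       clause_holds B (fun s => s = empty) e c) <->
                    fosat (upds empty P (map e P)) (fo_matrix phi).
  rewrite -fosat_glue_empty => [|v /fo_matrix_free [h1 h2]]; last first.
    by case: (ltnP v B) => [|/h2 /andP [] //]; lia.
  rewrite disjL_sem; split=> [[c hc /clause_holds_empty h]|].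
    by exists (clause_form c) => //; exact: List.in_map.
  by case=> f /List.in_map_iff [c [<- hc]] /clause_holds_empty h; exists c.
rewrite /team_true /fo_true /fo_translation exs_sem size_iota.
rewrite (clauses_translate (leq_addr n B) _ (leqnn B) _ hD) ?vars_belowE //.
split=> [[e /matrix_sem h]|[ms [hsz h]]].
  by exists (map e P); rewrite size_map size_iota.
exists (fun v => odflt (dom0 M) (upds empty P ms v)); apply/matrix_sem.
by rewrite upds_odflt ?iota_uniq ?size_iota.
Qed.

End Semantics.

Lemma sentence_FO_equivalent phi : sentence phi ->
  exists phi' : form S, [/\ isFO phi', sentence phi' &
    forall M : structure S, team_true M phi <-> fo_true M phi'].
Proof.
move=> hs; exists (fo_translation phi); split; first exact: isFO_fo_translation.
  by move=> v; apply/negP => /fo_translation_free; apply/negP.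
by move=> M; exact: fo_translation_sem.
Qed.

End FirstOrderSentences.

Section LiftTotality.
Variable S : signature.

Definition fresh_var (vs : seq nat) : nat := (sumn vs).+1.

Lemma fresh_var_notin vs : fresh_var vs \notin vs.
Proof.
have ge v : v \in vs -> v <= sumn vs.
  elim: vs => [|a vs IH] //=; rewrite inE => /orP [/eqP ->|/IH h]; first exact: leq_addr.
  exact: leq_trans h (leq_addl _ _).
by apply/negP => /ge; rewrite ltnn.
Qed.

Fixpoint lift_totality (phi : form S) : form S :=
  match phi with
  | FAllA vs => FFa (fresh_var vs) (FAllA S (rcons vs (fresh_var vs)))
  | FAnd p q => FAnd (lift_totality p) (lift_totality q)
  | FOr p q => FOr (lift_totality p) (lift_totality q)
  | FCor p q => FCor (lift_totality p) (lift_totality q)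
  | FEx x p => FEx x (lift_totality p)
  | FFa x p => FFa x (lift_totality p)
  | lit => lit
  end.

Lemma lift_totality_in k phi :
  inFOconstAllCor k phi -> inFOconstAllCor k.+1 (lift_totality phi).
Proof.
elim: phi => //= [vs|p IHp q IHq|p IHp q IHq|p IHp q IHq];
  try by case/andP => h1 h2; rewrite IHp ?IHq.
by rewrite size_rcons eqSS.
Qed.

Lemma lift_totality_sem (M : structure S) (X : team M) phi :
  tsat X (lift_totality phi) <-> tsat X phi.
Proof.
elim: phi X => [t1 t2|t1 t2|r a|r a|vs|vs|p IHp q IHq|p IHp q IHq|p IHp q IHq
                |x p IHp|x p IHp] X //=.
- set w := fresh_var vs.
  have mapw (s : assign M) m : map (upd s w m) vs = map s vs.
    apply/eq_in_map => v hv; apply: upd_other; apply: contraNneq (fresh_var_notin vs).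
    by move=> e; move: hv; rewrite e.
  split=> [H ms hs|H ms].
    have [t [[s [m [Xs ->]]]]] := H (rcons ms (dom0 M)) ltac:(by rewrite !size_rcons hs).
    by rewrite !map_rcons mapw => /rcons_inj [h _]; exists s.
  case/lastP: ms => [|ms m]; rewrite !size_rcons // => -[/H [s [Xs h]]].
  exists (upd s w m); split; first by exists s, m.
  by rewrite !map_rcons mapw h upd_same.
- by rewrite IHp IHq.
- by split=> -[Y [Z [h [/IHp a /IHq b]]]]; exists Y, Z.
- by rewrite IHp IHq.
- by split=> -[F [h /IHp a]]; exists F.
Qed.

End LiftTotality.

Lemma guarded_choice (A C : Type) (c0 : C) (P : A -> Prop) (R : A -> C -> Prop) :
  (forall a, P a -> exists b, R a b) -> exists f : A -> C, forall a, P a -> R a (f a).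
Proof.
move=> H; exists (fun a => ClassicalEpsilon.epsilon (inhabits c0) (R a)) => a /H.
exact: ClassicalEpsilon.epsilon_spec.
Qed.

Section Witnesses.
Variables (S : signature) (M : structure S) (k : nat).
Implicit Types (X Y Z : team M) (P Q : team M -> Prop).

Definition witnessed X (n : nat) P : Prop :=
  exists (c : nat) (W : nat -> seq (dom M) -> assign M), [/\ c <= n,
    forall i ms, i < c -> size ms = k -> X (W i ms) &
    forall Z, (forall t, Z t -> X t) ->
      (forall i ms, i < c -> size ms = k -> Z (W i ms)) -> P Z].

Definition witness_team (c : nat) (W : nat -> seq (dom M) -> assign M) : team M :=
  fun t => exists i ms, [/\ i < c, size ms = k & t = W i ms].

Lemma witnessed_witness_team X n P : witnessed X n P ->
  exists c W, [/\ c <= n, forall t, witness_team c W t -> X t & P (witness_team c W)].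
Proof.
move=> [c [W [hc hX hP]]]; exists c, W; split=> // [t [i [ms [hi hs ->]]]|]; first exact: hX.
by apply: hP => [t [i [ms [hi hs ->]]]|i ms hi hs]; [exact: hX | exists i, ms].
Qed.

Lemma witnessed_downward X P :
  (forall Z, (forall t, Z t -> X t) -> P Z) -> witnessed X 0 P.
Proof. by move=> H; exists 0, (fun _ _ => empty_assign M); split=> // Z /H. Qed.

Lemma witnessed_weaken X n n' P Q : n <= n' ->
  (forall Z, (forall t, Z t -> X t) -> P Z -> Q Z) -> witnessed X n P -> witnessed X n' Q.
Proof.
move=> hn hPQ [c [W [hc hX hP]]]; exists c, W; split=> // [|Z hZ hW].
  exact: leq_trans hn.
by apply: (hPQ Z hZ); exact: hP.
Qed.

Lemma witnessed_and X n1 n2 P1 P2 : witnessed X n1 P1 -> witnessed X n2 P2 ->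
  witnessed X (n1 + n2) (fun Z => P1 Z /\ P2 Z).
Proof.
move=> [c1 [W1 [hc1 hX1 hP1]]] [c2 [W2 [hc2 hX2 hP2]]].
exists (c1 + c2), (fun i ms => if i < c1 then W1 i ms else W2 (i - c1) ms).
have split_range (Z : team M) : (forall i ms, i < c1 + c2 -> size ms = k ->
      Z (if i < c1 then W1 i ms else W2 (i - c1) ms)) <->
    (forall i ms, i < c1 -> size ms = k -> Z (W1 i ms)) /\
    (forall i ms, i < c2 -> size ms = k -> Z (W2 i ms)).
  split=> [H|[H1 H2] i ms hi hs].
    split=> i ms hi hs; first by have := H i ms ltac:(lia) hs; rewrite hi.
    by have := H (c1 + i) ms ltac:(lia) hs; rewrite addKn ifN //; lia.
  by case: ltnP => h; [exact: H1 | apply: H2 => //; lia].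
split; first lia.
  by apply/split_range.
by move=> Z hZ /split_range [h1 h2]; split; [exact: hP1 | exact: hP2].
Qed.

Lemma witnessed_restrict X Y n P : (forall t, Y t -> X t) ->
  witnessed Y n P -> witnessed X n (fun Z => P (fun t => Z t /\ Y t)).
Proof.
move=> hYX [c [W [hc hY hP]]]; exists c, W; split=> // [i ms hi hs|Z hZ hW].
  by apply: hYX; exact: hY.
by apply: hP => [t []|i ms hi hs] //; split; [exact: hW | exact: hY].
Qed.

Lemma witnessed_pullback X n P (T : team M -> team M) (R : assign M -> assign M -> Prop) :
  (forall Z t, T Z t <-> exists2 s, Z s & R s t) ->
  witnessed (T X) n P -> witnessed X n (fun Z => P (T Z)).
Proof.
move=> hT [c [W [hc hX hP]]].
have ex_orig (im : nat * seq (dom M)) : im.1 < c /\ size im.2 = k ->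
    exists s, X s /\ R s (W im.1 im.2).
  by case: im => i ms [/= hi hs]; have /hT [s Xs hR] := hX i ms hi hs; exists s.
have [orig horig] := guarded_choice (empty_assign M) ex_orig.
exists c, (fun i ms => orig (i, ms)); split=> // [i ms hi hs|Z hZ hW].
  by case: (horig (i, ms) (conj hi hs)).
apply: hP => [t /hT [s /hZ Xs hR]|i ms hi hs]; first by apply/hT; exists s.
by apply/hT; exists (orig (i, ms)); [exact: hW | case: (horig (i, ms) (conj hi hs))].
Qed.

Lemma witnessed_totality X vs : size vs = k -> tsat X (FAllA S vs) ->
  witnessed X 1 (fun Z => tsat Z (FAllA S vs)).
Proof.
move=> hk H; have ex_W ms : size ms = k -> exists s, X s /\ map s vs = map Some ms.
  by move=> hs; apply: H; rewrite hs hk.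
have [W hW] := guarded_choice (empty_assign M) ex_W.
exists 1, (fun _ => W); split=> // [i ms _ /hW [] //|Z hZ hWZ ms hs].
have hms : size ms = k by rewrite hs hk.
by exists (W ms); split; [exact: hWZ 0 ms isT hms | exact: (hW ms hms).2].
Qed.

Fixpoint ntotal (phi : form S) : nat :=
  match phi with
  | FAllA _ => 1
  | FAnd p q | FOr p q | FCor p q => ntotal p + ntotal q
  | FEx _ p | FFa _ p => ntotal p
  | _ => 0
  end.

Lemma tsat_witnessed phi X : inFOconstAllCor k phi -> tsat X phi ->
  witnessed X (ntotal phi) (fun Z => tsat Z phi).
Proof.
elim: phi X => [t1 t2|t1 t2|r a|r a|vs|vs|p IHp q IHq|p IHp q IHq|p IHp q IHq
                |x p IHp|x p IHp] X /= hin;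
  try by move=> H; apply: witnessed_downward => Z hZ s /hZ; exact: H.
- by move=> H; apply: witnessed_downward => Z hZ s s' /hZ Xs /hZ Xs'; exact: H.
- by move=> H; apply: witnessed_totality => //; exact/eqP.
- case/andP: hin => h1 h2 [/(IHp X h1) w1 /(IHq X h2) w2].
  exact: witnessed_and.
- case/andP: hin => h1 h2 [Y [Y' [hX [/(IHp Y h1) w1 /(IHq Y' h2) w2]]]].
  have := witnessed_and (witnessed_restrict (fun t Yt => (hX t).2 (or_introl Yt)) w1)
                        (witnessed_restrict (fun t Yt => (hX t).2 (or_intror Yt)) w2).
  apply: witnessed_weaken => // Z hZ [t1 t2].
  exists (fun t => Z t /\ Y t), (fun t => Z t /\ Y' t); split=> // s.
  by split=> [Zs|[] []//]; case: ((hX s).1 (hZ s Zs)); [left | right].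
- case/andP: hin => h1 h2 [/(IHp X h1) w|/(IHq X h2) w].
    by apply: witnessed_weaken w => [|Z _ h]; [lia | left].
  by apply: witnessed_weaken w => [|Z _ h]; [lia | right].
- case=> F [hF /(IHp _ hin) w].
  have hT Z t : (exists s m, [/\ Z s, F s m & t = upd s x m]) <->
                exists2 s, Z s & exists m, F s m /\ t = upd s x m.
    split=> [[s [m [Zs Fsm ->]]]|[s Zs [m [Fsm ->]]]]; last by exists s, m.
    by exists s => //; exists m.
  apply: witnessed_weaken
    (witnessed_pullback (T := fun Z t => exists s m, [/\ Z s, F s m & t = upd s x m]) hT w)
    => // Z hZ h.
  by exists F; split=> // s /hZ /hF.
- move=> /(IHp _ hin) w.
  apply: (witnessed_pullback (T := fun Z t => exists s m, Z s /\ t = upd s x m)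
                             (R := fun s t => exists m, t = upd s x m)
                             (P := fun Z => tsat Z p)) w => Z t.
  by split=> [[s [m [Zs ->]]]|[s Zs [m ->]]]; [exists s => //; exists m | exists s, m].
Qed.

End Witnesses.

Section FullTeam.
Variables (S : signature) (M : structure S) (N : nat).

Definition full_team : team M := fun s => forall v, isSome (s v) = (v < N).

Lemma full_team_on : team_on (iota 0 N) full_team.
Proof. by move=> s Xs v; rewrite mem_iota add0n Xs. Qed.

Lemma full_team_total K : K <= N -> tsat full_team (FAllA S (iota 0 K)).
Proof.
move=> hK ms; rewrite size_iota => hs.
exists (fun v => if v < N then Some (nth (dom0 M) ms v) else None).
split=> [v|]; first by case: ifP.
rewrite -[in RHS](mkseq_nth (dom0 M) ms) -map_comp hs; apply/eq_in_map => v.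
by rewrite mem_iota add0n => hv /=; rewrite (leq_trans hv hK).
Qed.

End FullTeam.

Arguments full_team {S} M N.
Arguments full_team_on {S} M N.

Definition empty_signature : signature := @Signature void (fun _ => 0) void (fun _ => 0).

Definition ord_structure (n : nat) : structure empty_signature :=
  @mkStructure empty_signature 'I_n.+1 ord0
    (fun r _ => match r with end) (fun f _ => match f with end).

Lemma totality_witnesses_card n k c (W : nat -> seq 'I_n.+1 -> assign (ord_structure n)) :
  tsat (witness_team (M := ord_structure n) k c W) (FAllA _ (iota 0 k.+1)) -> n < c.
Proof.
move=> H.
pose g (p : 'I_c * k.-tuple 'I_n.+1) := [tuple odflt ord0 (W p.1 p.2 j) | j < k.+1].
have sub : #|{: k.+1.-tuple 'I_n.+1}| <= #|image g predT|.
  apply: subset_leq_card; apply/subsetP => u _.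
  have [t [[i [ms [hi hms ->]]] hmap]] := H u ltac:(by rewrite size_tuple size_iota).
  apply/imageP; exists (Ordinal hi, Tuple (introT eqP hms)) => //.
  apply: eq_from_tnth => j; rewrite tnth_mktuple /=.
  have := congr1 (fun l => nth None l j) hmap.
  rewrite (nth_map 0) ?size_iota // (nth_map ord0) ?size_tuple // nth_iota // add0n.
  by rewrite (tnth_nth ord0) => ->.
have := leq_trans sub (leq_image_card g predT).
by rewrite card_tuple card_prod !card_ord card_tuple card_ord expnS leq_pmul2r ?expn_gt0.
Qed.

Lemma totality_not_in_lower k : ~ included (FOconstAllCor k.+1) (FOconstAllCor k).
Proof.
move=> H; pose phi := FAllA empty_signature (iota 0 k.+1).
have [psi [hpsi heq]] := H _ phi ltac:(by rewrite /FOconstAllCor /= size_iota).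
pose M := ord_structure (ntotal psi); pose N := maxn k.+1 (var_bound psi).
have hfree v : ffree v phi || ffree v psi -> v \in iota 0 N.
  case/orP => h; rewrite mem_iota add0n /=.
    have : v \in iota 0 k.+1 := h; rewrite mem_iota add0n /= => hv.
    exact: leq_trans hv (leq_maxl _ _).
  by apply: leq_trans (vars_below_free _ h) (leq_maxr _ _); rewrite vars_belowE.
have tX : tsat (full_team M N) psi.
  exact/(heq M _ _ (full_team_on M N) hfree)/full_team_total/leq_maxl.
have [c [W [hc hYX tY]]] := witnessed_witness_team (tsat_witnessed hpsi tX).
have hY : team_on (iota 0 N) (witness_team k c W).
  by move=> t /hYX; exact: full_team_on.
have := totality_witnesses_card ((heq M _ _ hY hfree).2 tY); lia.
Qed.

Lemma lift_totality_included k : included (FOconstAllCor k) (FOconstAllCor k.+1).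
Proof.
move=> S phi h; exists (lift_totality phi); split; first exact: lift_totality_in.
by move=> M V X _ _; rewrite lift_totality_sem.
Qed.

Lemma sentences_FO_all (L : logic) : sentences_FO L.
Proof. by move=> S phi _; exact: sentence_FO_equivalent. Qed.

Theorem mainTheorem4 : forall k : nat,
  strictly_included (FOconstAllCor k) (FOconstAllCor k.+1) /\
  sentences_FO (FOconstAllCor k) /\ sentences_FO (FOconstAllCor k.+1).
Proof.
move=> k; split; last by split; exact: sentences_FO_all.
split; [exact: lift_totality_included | exact: totality_not_in_lower].
Qed.
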